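(* Let $H$ be an Abelian group, $X$ a simplicial set, $\gamma:X_2\to H$ a normalized 2-cocycle and $\eta$ its associated twisting function. Let $\mathrm{No}(X,H,\gamma)$ be the set of normalized 1-cochains $\alpha:X_1\to H$ with $\partial\alpha=\gamma$. Then for every $\alpha\in\mathrm{No}(X,H,\gamma)$ there is a unique section $\varphi_\alpha$ of $\pi_\eta:N(H)\times_\eta X\to X$ given in degrees $0,1,2$ by $x\mapsto(0,x)$, $x\mapsto(\alpha(x),x)$, $x\mapsto((\alpha(d_2x),\alpha(d_1x)-\alpha(d_2x)),x)$, and the map $\mathrm{No}(X,H,\gamma)\to\mathrm{Sec}(\pi_\eta)$, $\alpha\mapsto\varphi_\alpha$, is a bijection.
   Context: $N(H)$ is the nerve of $H$: $N(H)_n=H^n$, $d_0$ drops the first entry, $d_n$ drops the last, $d_i$ for $0<i<n$ replaces $a_i,a_{i+1}$ by $a_i+a_{i+1}$, $s_j$ inserts $0$ after the $j$-th entry. A normalized $k$-cochain is a function $X_k\to H$ vanishing on degenerate simplices; $\partial\alpha(x)=\alpha(d_0x)-\alpha(d_1x)+\alpha(d_2x)$; a normalized 2-cocycle is a normalized 2-cochain $\gamma$ with $\sum_{i=0}^3(-1)^i\gamma(d_i\sigma)=0$ for $\sigma\in X_3$. The associated twisting function: $\eta_1=0$, $\eta_2=\gamma$, $\eta_n(x)=(\gamma(d_3\cdots d_nx),\eta_{n-1}(d_1x)-\eta_{n-1}(d_0x))\in H^{n-1}$. $N(H)\times_\eta X$ has $n$-simplices $H^n\times X_n$, $d_0(g,x)=(d_0g+\eta_n(x),d_0x)$,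 other faces and degeneracies componentwise; $\pi_\eta$ is the projection; $\mathrm{Sec}(\pi_\eta)$ is the set of simplicial maps $s:X\to N(H)\times_\eta X$ with $\pi_\eta s=\mathrm{id}$. *)

From HB Require Import structures.
From mathcomp Require Import all_boot all_order all_algebra.
Set Implicit Arguments. Unset Strict Implicit. Unset Printing Implicit Defensive.
Import GRing.Theory.
Local Open Scope ring_scope.

(* Graded sets with face and degeneracy operators:
   fc n i : X_{n+1} -> X_n  is d_i   (meaningful for i <= n+1),
   dg n j : X_n -> X_{n+1}  is s_j   (meaningful for j <= n). *)
Record ssdata := SSData {
  obj :> nat -> Type;
  fc : forall n : nat, nat -> obj n.+1 -> obj n;
  dg : forall n : nat, nat -> obj n -> obj n.+1 }.

Arguments obj s n%_nat_scope.
Arguments fc s n%_nat_scope i%_nat_scope _.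
Arguments dg s n%_nat_scope j%_nat_scope _.

Definition is_simplicial (X : ssdata) : Prop :=
  [/\ (forall n i j (x : X n.+2), (i < j)%N -> (j <= n.+2)%N ->
          fc i (fc j x) = fc (j.-1) (fc i x)),
      (forall n i j (x : X n.+1), (i < j)%N -> (j <= n.+1)%N ->
          fc i (dg j x) = dg (j.-1) (fc i x)),
      (forall n j (x : X n), (j <= n)%N -> fc j (dg j x) = x /\ fc j.+1 (dg j x) = x),
      (forall n i j (x : X n.+1), (j.+1 < i)%N -> (i <= n.+2)%N ->
          fc i (dg j x) = dg j (fc (i.-1) x))
    & (forall n i j (x : X n), (i <= j)%N -> (j <= n)%N ->
          dg i (dg j x) = dg j.+1 (dg i x))].
Arguments fc {s n}.
Arguments dg {s n}.

Definition is_smap (X Y : ssdata) (f : forall n, X n -> Y n) : Prop :=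
  (forall n i (x : X n.+1), (i <= n.+1)%N -> f n (fc i x) = fc i (f n.+1 x)) /\
  (forall n j (x : X n), (j <= n)%N -> f n.+1 (dg j x) = dg j (f n x)).

Section Nerve.
Variable H : zmodType.

(* k-th entry (0-based) of an element of H^n, 0 if out of range *)
Definition ent n (g : {ffun 'I_n -> H}) (k : nat) : H :=
  oapp g 0 (insub k : option 'I_n).

(* d_i on N(H)_{n+1} = H^{n+1}: d_0 drops first, d_{n+1} drops last,
   0<i<n+1 replaces a_i, a_{i+1} (1-based) by a_i + a_{i+1}. *)
Definition nface n (i : nat) (g : {ffun 'I_n.+1 -> H}) : {ffun 'I_n -> H} :=
  [ffun j : 'I_n => if (j.+1 < i)%N then ent g j
                    else if j.+1 == i then ent g j + ent g j.+1
                    else ent g j.+1].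

(* s_j inserts 0 after the j-th entry (1-based). *)
Definition ndegen n (j : nat) (g : {ffun 'I_n -> H}) : {ffun 'I_n.+1 -> H} :=
  [ffun k : 'I_n.+1 => if (k < j)%N then ent g k else if k == j :> nat then 0
                       else ent g k.-1].

Definition Nerve : ssdata := @SSData (fun n => {ffun 'I_n -> H}) nface ndegen.

Definition tcons n (h : H) (g : {ffun 'I_n -> H}) : {ffun 'I_n.+1 -> H} :=
  [ffun k : 'I_n.+1 => if k == 0%N :> nat then h else ent g k.-1].

Definition tsub n (f g : {ffun 'I_n -> H}) : {ffun 'I_n -> H} :=
  [ffun k => f k - g k].
Definition tadd n (f g : {ffun 'I_n -> H}) : {ffun 'I_n -> H} :=
  [ffun k => f k + g k].
End Nerve.

Section Twist.
Variables (H : zmodType) (X : ssdata).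

Definition normalized1 (a : X 1 -> H) : Prop := forall y : X 0, a (dg 0 y) = 0.
Definition normalized2 (c : X 2 -> H) : Prop :=
  forall (y : X 1) j, (j <= 1)%N -> c (dg j y) = 0.
Definition cocycle2 (c : X 2 -> H) : Prop :=
  forall s : X 3, c (fc 0 s) - c (fc 1 s) + c (fc 2 s) - c (fc 3 s) = 0.
Definition cobound1 (a : X 1 -> H) (x : X 2) : H :=
  a (fc 0 x) - a (fc 1 x) + a (fc 2 x).

Local Unset Implicit Arguments.
Fixpoint lastfaces (k : nat) : X k.+2 -> X 2 :=
  match k return X k.+2 -> X 2 with
  | 0 => fun x => x
  | k'.+1 => fun x => lastfaces k' (fc k'.+3 x)
  end.

Variable gamma : X 2 -> H.

(* twist k = eta_{k+1} : X_{k+1} -> H^k.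
   eta_1 = 0, eta_{n}(x) = (gamma(d_3...d_n x), eta_{n-1}(d_1 x) - eta_{n-1}(d_0 x)),
   which for n = 2 gives eta_2 = gamma. *)
Fixpoint twist (k : nat) : X k.+1 -> {ffun 'I_k -> H} :=
  match k return X k.+1 -> {ffun 'I_k -> H} with
  | 0 => fun _ => [ffun i => 0]
  | k'.+1 => fun x => tcons (gamma (lastfaces k' x))
                        (tsub (twist k' (fc 1 x)) (twist k' (fc 0 x)))
  end.

Local Set Implicit Arguments.
Definition tw_face n (i : nat) (p : {ffun 'I_n.+1 -> H} * X n.+1)
  : {ffun 'I_n -> H} * X n :=
  if i == 0%N then (tadd (nface 0%N p.1) (twist n p.2), fc 0 p.2)
  else (nface i p.1, fc i p.2).
Definition tw_degen n (j : nat) (p : {ffun 'I_n -> H} * X n)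
  : {ffun 'I_n.+1 -> H} * X n.+1 := (ndegen j p.1, dg j p.2).

Definition TwProd : ssdata :=
  @SSData (fun n => ({ffun 'I_n -> H} * X n)%type) tw_face tw_degen.

Definition proj_eta : forall n, TwProd n -> X n := fun n p => p.2.

Definition is_section (phi : forall n, X n -> TwProd n) : Prop :=
  @is_smap X TwProd phi /\ forall n x, proj_eta (phi n x) = x.

Definition No (a : X 1 -> H) : Prop :=
  normalized1 a /\ forall x : X 2, cobound1 a x = gamma x.

Definition low_formulas (a : X 1 -> H) (phi : forall n, X n -> TwProd n) : Prop :=
  [/\ forall x : X 0, phi 0%N x = ([ffun _ => 0], x),
      forall x : X 1, phi 1%N x = ([ffun _ => a x], x)
    & forall x : X 2, phi 2%N x =
        ([ffun j : 'I_2 => if val j == 0%N then a (fc 2 x)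
                           else a (fc 1 x) - a (fc 2 x)], x)].
End Twist.

From mathcomp Require Import all_boot all_order all_algebra zify.
From Stdlib Require Import FunctionalExtensionality.

(* Write (v0, ..., vm) for the face of a simplex spanned by the listed vertices.
   The section attached to [a] sends a simplex [x] of dimension [n + 1] to the
   successive differences of a(0,0) = 0, a(0,1), ..., a(0,n+1).  Unwinding the
   recursive definition of the twisting function with the cocycle identity on
   the tetrahedra (0,1,2,m) shows that [eta x] is the sequence of successive
   differences of gamma(0,1,1) = 0, gamma(0,1,2), ..., so compatibility with the
   face d0 is the identity [cobound1 a = gamma] on the triangles (0,1,m), while
   the other faces and the degeneracies only move vertices (by [bump] and
   [unbump]) and use the normalization of [a].  Conversely, the face d0 and the
   last face of [psi x] together determine [psi x], so a section is determined by
   its component of degree 1, which is read off from the low-degree formulas. *)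

Set Implicit Arguments. Unset Strict Implicit. Unset Printing Implicit Defensive.
Import GRing.Theory.

Section Entries.
Variable H : zmodType.
Local Open Scope ring_scope.

Lemma subrACA (a b c d : H) : (a - b) - (c - d) = (a - c) - (b - d).
Proof. by rewrite !opprD !opprK addrACA. Qed.

Lemma entE n (g : {ffun 'I_n -> H}) k (lt_kn : (k < n)%N) : ent g k = g (Ordinal lt_kn).
Proof. by rewrite /ent insubT. Qed.

Lemma eq_from_ent n (f g : {ffun 'I_n -> H}) :
  (forall k, (k < n)%N -> ent f k = ent g k) -> f = g.
Proof. by move=> eq_fg; apply/ffunP => -[k lt_kn]; rewrite -!entE eq_fg. Qed.

Lemma ent_tcons0 n h (g : {ffun 'I_n -> H}) : ent (tcons h g) 0%N = h.
Proof. by rewrite (entE _ (ltn0Sn n)) ffunE. Qed.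

Lemma ent_tconsS n h (g : {ffun 'I_n -> H}) k : (k < n)%N -> ent (tcons h g) k.+1 = ent g k.
Proof. by move=> lt_kn; rewrite entE ffunE. Qed.

Lemma ent_tsub n (f g : {ffun 'I_n -> H}) k : (k < n)%N ->
  ent (tsub f g) k = ent f k - ent g k.
Proof. by move=> lt_kn; rewrite !entE ffunE. Qed.

Lemma ent_tadd n (f g : {ffun 'I_n -> H}) k : (k < n)%N ->
  ent (tadd f g) k = ent f k + ent g k.
Proof. by move=> lt_kn; rewrite !entE ffunE. Qed.

Lemma ent_nface n i (g : {ffun 'I_n.+1 -> H}) k : (k < n)%N ->
  ent (nface i g) k = if (k.+1 < i)%N then ent g k
                      else if k.+1 == i then ent g k + ent g k.+1
                      else ent g k.+1.
Proof. by move=> lt_kn; rewrite entE ffunE. Qed.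

Lemma ent_nface0 n (g : {ffun 'I_n.+1 -> H}) k : (k < n)%N -> ent (nface 0%N g) k = ent g k.+1.
Proof. by move=> lt_kn; rewrite ent_nface. Qed.

Lemma ent_ndegen n j (g : {ffun 'I_n -> H}) k : (k < n.+1)%N ->
  ent (ndegen j g) k = if (k < j)%N then ent g k else if k == j then 0 else ent g k.-1.
Proof. by move=> lt_kn; rewrite entE ffunE. Qed.

End Entries.

Section Simplicial.
Variable X : ssdata.
Hypothesis X_simplicial : is_simplicial X.

Lemma face_face n i j (x : X n.+2) : i < j -> j <= n.+2 ->
  fc i (fc j x) = fc j.-1 (fc i x).
Proof. by case: X_simplicial => ff _ _ _ _; apply: ff. Qed.

Lemma face_degen_id n j (x : X n) : j <= n -> fc j (dg j x) = x.
Proof. by case: X_simplicial => _ _ fd _ _ le_jn; case: (fd n j x le_jn). Qed.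

Lemma faceS_degen_id n j (x : X n) : j <= n -> fc j.+1 (dg j x) = x.
Proof. by case: X_simplicial => _ _ fd _ _ le_jn; case: (fd n j x le_jn). Qed.

Lemma face_degen_gt n i j (x : X n.+1) : j.+1 < i -> i <= n.+2 ->
  fc i (dg j x) = dg j (fc i.-1 x).
Proof. by case: X_simplicial => _ _ _ fd _; apply: fd. Qed.

(* For [x] of dimension [n + p] (p = 1, 2, 3), [edge0 n k x], [tri01 n k x] and
   [tet012 n k x] are the faces of [x] with vertices (0, k+1), (0, 1, k+2) and
   (0, 1, 2, k+3): the recursion deletes the last vertex while it is not the
   wanted one, and vertex [p] once it is. *)
Local Unset Implicit Arguments.
Fixpoint edge0 (n k : nat) : X n.+1 -> X 1 :=
  match n return X n.+1 -> X 1 with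
  | 0 => id
  | n'.+1 => fun x => if k == n'.+1 then edge0 n' n' (fc 1 x) else edge0 n' k (fc n'.+2 x)
  end.

Fixpoint tri01 (n k : nat) : X n.+2 -> X 2 :=
  match n return X n.+2 -> X 2 with
  | 0 => id
  | n'.+1 => fun x => if k == n'.+1 then tri01 n' n' (fc 2 x) else tri01 n' k (fc n'.+3 x)
  end.

Fixpoint tet012 (n k : nat) : X n.+3 -> X 3 :=
  match n return X n.+3 -> X 3 with
  | 0 => id
  | n'.+1 => fun x => if k == n'.+1 then tet012 n' n' (fc 3 x) else tet012 n' k (fc n'.+4 x)
  end.
Local Set Implicit Arguments.

Lemma edge0_last n (x : X n.+2) : edge0 n.+1 n.+1 x = edge0 n n (fc 1 x).
Proof. by rewrite /= eqxx. Qed.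

Lemma edge0_lt n k (x : X n.+2) : k <= n -> edge0 n.+1 k x = edge0 n k (fc n.+2 x).
Proof. by move=> le_kn /=; rewrite ifN //; lia. Qed.

Lemma tri01_last n (x : X n.+3) : tri01 n.+1 n.+1 x = tri01 n n (fc 2 x).
Proof. by rewrite /= eqxx. Qed.

Lemma tri01_lt n k (x : X n.+3) : k <= n -> tri01 n.+1 k x = tri01 n k (fc n.+3 x).
Proof. by move=> le_kn /=; rewrite ifN //; lia. Qed.

Lemma tet012_last n (x : X n.+4) : tet012 n.+1 n.+1 x = tet012 n n (fc 3 x).
Proof. by rewrite /= eqxx. Qed.

Lemma tet012_lt n k (x : X n.+4) : k <= n -> tet012 n.+1 k x = tet012 n k (fc n.+4 x).
Proof. by move=> le_kn /=; rewrite ifN //; lia. Qed.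

Lemma edge0_face n i k (x : X n.+2) : 1 <= i <= n.+2 -> k <= n ->
  edge0 n k (fc i x) = edge0 n.+1 (if k.+1 < i then k else k.+1) x.
Proof.
elim: n i k x => [|n IH] i k x /andP[i_gt0 le_in] le_kn.
  have -> : k = 0 by lia.
  by case: i i_gt0 le_in => [|[|[|i]]].
case: (eqVneq i n.+3) => [-> | ne_in].
  rewrite ifT; last by lia.
  by rewrite [RHS]edge0_lt.
case: (eqVneq k n.+1) => [-> | ne_kn].
  rewrite ifN; last by lia.
  rewrite edge0_last [RHS]edge0_last.
  case: (eqVneq i 1) => [-> | ne_i1]; first by rewrite edge0_last.
  rewrite face_face; [|lia|lia].
  by rewrite IH; [rewrite ifN //|lia|lia]; lia.
rewrite edge0_lt; last by lia.
rewrite -(@face_face _ i n.+3); [|lia|lia].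
by rewrite IH; [rewrite [RHS]edge0_lt //; case: ifP|lia|lia]; lia.
Qed.

Lemma tri01_face0 n k (x : X n.+2) : k <= n -> fc 0 (tri01 n k x) = edge0 n k (fc 0 x).
Proof.
elim: n k x => [|n IH] k x le_kn //.
case: (eqVneq k n.+1) => [-> | ne_kn].
  by rewrite tri01_last edge0_last IH // face_face.
have le_kn' : k <= n by lia.
by rewrite tri01_lt // edge0_lt // IH // face_face.
Qed.

Lemma tri01_face1 n k (x : X n.+2) : k <= n -> fc 1 (tri01 n k x) = edge0 n.+1 k.+1 x.
Proof.
elim: n k x => [|n IH] k x le_kn; first by have -> : k = 0 by lia.
case: (eqVneq k n.+1) => [-> | ne_kn].
  by rewrite tri01_last IH // !edge0_last face_face.
have le_kn' : k <= n by lia.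
by rewrite tri01_lt // IH // [RHS]edge0_lt.
Qed.

Lemma tri01_face2 n k (x : X n.+2) : k <= n -> fc 2 (tri01 n k x) = edge0 n.+1 0 x.
Proof.
elim: n k x => [|n IH] k x le_kn; first by rewrite edge0_lt.
have edge0_face_ge2 i : 2 <= i <= n.+3 -> edge0 n.+1 0 (fc i x) = edge0 n.+2 0 x.
  by move=> le_2in; rewrite edge0_face ?ifT //; lia.
case: (eqVneq k n.+1) => [-> | ne_kn]; first by rewrite tri01_last IH // edge0_face_ge2.
by rewrite tri01_lt ?IH ?edge0_face_ge2 //; lia.
Qed.

Lemma lastfaces_tri01 n (x : X n.+2) : lastfaces X n x = tri01 n 0 x.
Proof. by elim: n x => [|n IH] x //=; rewrite IH tri01_lt. Qed.

Lemma tri01_0_face n i (x : X n.+3) : 3 <= i <= n.+3 -> tri01 n 0 (fc i x) = tri01 n.+1 0 x.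
Proof.
elim: n i x => [|n IH] i x /andP[le3i le_in]; first by have -> : i = 3 by lia.
rewrite [RHS]tri01_lt //; case: (eqVneq i n.+4) => [-> // | ne_in].
by rewrite tri01_lt // -(@face_face _ i n.+4) ?IH //; lia.
Qed.

Lemma tet012_face01 n i k (x : X n.+3) : i <= 1 -> k <= n ->
  fc i (tet012 n k x) = tri01 n k (fc i x).
Proof.
elim: n i k x => [|n IH] i k x le_i1 le_kn //.
case: (eqVneq k n.+1) => [-> | ne_kn].
  by rewrite tet012_last tri01_last IH // face_face //; lia.
have le_kn' : k <= n by lia.
by rewrite tet012_lt // tri01_lt // IH // face_face //; lia.
Qed.

Lemma tet012_face2 n k (x : X n.+3) : k <= n -> fc 2 (tet012 n k x) = tri01 n.+1 k.+1 x.
Proof.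
elim: n k x => [|n IH] k x le_kn; first by have -> : k = 0 by lia.
case: (eqVneq k n.+1) => [-> | ne_kn].
  by rewrite tet012_last IH // !tri01_last face_face.
have le_kn' : k <= n by lia.
by rewrite tet012_lt // IH // [RHS]tri01_lt.
Qed.

Lemma tet012_face3 n k (x : X n.+3) : k <= n -> fc 3 (tet012 n k x) = tri01 n.+1 0 x.
Proof.
elim: n k x => [|n IH] k x le_kn; first by rewrite tri01_lt.
case: (eqVneq k n.+1) => [-> | ne_kn]; first by rewrite tet012_last IH // tri01_0_face.
by rewrite tet012_lt ?IH ?tri01_0_face //; lia.
Qed.

Section Twisting.
Variables (H : zmodType) (gamma : X 2 -> H).
Hypothesis gamma_cocycle : cocycle2 gamma.
Local Open Scope ring_scope.

(* [gamma01 x m] is gamma(0, 1, m + 1); at [m = 0] it is 0, the value of a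
   normalized cocycle on the degenerate triangle (0, 1, 1). *)
Definition gamma01 n (x : X n.+2) (m : nat) : H :=
  if m is m'.+1 then gamma (tri01 n m' x) else 0.

Lemma gamma01_face01 n (x : X n.+3) m : (m <= n.+1)%N ->
  gamma01 (fc 1 x) m - gamma01 (fc 0 x) m = gamma01 x m.+1 - gamma01 x 1%N.
Proof.
case: m => [|m] le_mn /=; first by rewrite !subrr.
have := gamma_cocycle (tet012 n m x).
rewrite (tet012_face01 (i := 0)) // (tet012_face01 (i := 1)) //.
rewrite tet012_face2 // tet012_face3 // => cocycle.
by apply/eqP; rewrite -subr_eq0 -oppr_eq0 !opprB addrC addrA cocycle.
Qed.

Lemma twistS n (x : X n.+2) : twist H X gamma n.+1 x =
  tcons (gamma (lastfaces X n x)) (tsub (twist H X gamma n (fc 1 x)) (twist H X gamma n (fc 0 x))).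
Proof. by []. Qed.

Lemma ent_twist n (x : X n.+2) k : (k <= n)%N ->
  ent (twist H X gamma n.+1 x) k = gamma01 x k.+1 - gamma01 x k.
Proof.
elim: n x k => [|n IH] x k le_kn.
  have -> : k = 0%N by lia.
  by rewrite ent_tcons0 subr0.
rewrite twistS; case: k le_kn => [|k] le_kn.
  by rewrite ent_tcons0 /= lastfaces_tri01 subr0.
have le_kn1 : (k <= n.+1)%N by lia.
by rewrite ent_tconsS // ent_tsub // !IH // subrACA !gamma01_face01 // opprB subrKA.
Qed.

Section Cochain.
Variable a : X 1 -> H.
Hypothesis a_normalized : normalized1 a.
Hypothesis a_cobound : forall x, cobound1 a x = gamma x.

(* [alpha0 x m] is a(0, m), with the convention a(0, 0) = 0. *)
Definition alpha0 n (x : X n.+1) (m : nat) : H := if m is m'.+1 then a (edge0 n m' x) else 0.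

Lemma alpha0_face0 n (x : X n.+2) m : (m <= n.+1)%N ->
  alpha0 (fc 0 x) m = alpha0 x m.+1 - alpha0 x 1%N + gamma01 x m.
Proof.
case: m => [|m] le_mn /=; first by rewrite subrr addr0.
rewrite -a_cobound /cobound1 tri01_face0 // tri01_face1 // tri01_face2 //.
by rewrite addrCA !subrK.
Qed.

Lemma alpha0_face n i (x : X n.+2) m : (1 <= i <= n.+2)%N -> (m <= n.+1)%N ->
  alpha0 (fc i x) m = alpha0 x (bump i m).
Proof.
move=> le_1in; case: m => [|m] le_mn.
  by have -> : (bump i 0 = 0)%N by rewrite /bump; lia.
rewrite /= edge0_face //.
by have -> : (bump i m.+1 = (if m.+1 < i then m else m.+1).+1)%N by rewrite /bump; case: ifP; lia.
Qed.

Lemma alpha0_degen0 n (x : X n) : alpha0 (dg 0 x) 1%N = 0.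
Proof.
elim: n x => [|n IH] x; first exact: a_normalized.
by rewrite /= face_degen_gt //; apply: IH.
Qed.

Lemma alpha0_degen n j (x : X n.+1) m : (j <= n.+1)%N -> (m <= n.+2)%N ->
  alpha0 (dg j x) m = alpha0 x (unbump j m).
Proof.
move=> le_jn le_mn; case: (eqVneq m j.+1) => [-> | ne_mj].
  case: j le_jn => [|j] le_jn; first exact: alpha0_degen0.
  rewrite -{2}(face_degen_id x le_jn) alpha0_face; [|lia|rewrite /unbump; lia].
  by rewrite unbumpK // inE; lia.
have -> : unbump j m = unbump j.+1 m by rewrite /unbump; lia.
by rewrite -{1}(@unbumpK j.+1 m) ?inE // -alpha0_face ?faceS_degen_id // /unbump; lia.
Qed.

Definition alpha_diffs n (x : X n.+1) : {ffun 'I_n.+1 -> H} :=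
  [ffun k : 'I_n.+1 => alpha0 x k.+1 - alpha0 x k].

Lemma ent_alpha_diffs n (x : X n.+1) k : (k <= n)%N ->
  ent (alpha_diffs x) k = alpha0 x k.+1 - alpha0 x k.
Proof. by move=> le_kn; rewrite entE ffunE. Qed.

Definition section_of_cochain : forall n, X n -> TwProd gamma n :=
  fun n => if n is n'.+1 return X n -> TwProd gamma n then fun x => (alpha_diffs x, x)
           else fun x => ([ffun _ => 0], x).

Lemma section_of_cochain_face n i (x : X n.+1) : (i <= n.+1)%N ->
  section_of_cochain (fc i x) = tw_face gamma i (section_of_cochain x).
Proof.
rewrite /tw_face; case: n x => [|n] x le_in.
  by case: eqP => [-> | _]; congr pair; apply/ffunP => -[].
case: eqP => [-> | /eqP ne_i0] /=; congr pair; apply: eq_from_ent => k lt_kn.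
  rewrite ent_tadd // ent_nface0 // ent_twist // !ent_alpha_diffs //; try lia.
  rewrite !alpha0_face0; try lia.
  by rewrite opprD addrACA opprB subrKA.
rewrite ent_nface // !ent_alpha_diffs ?alpha0_face; try lia.
rewrite /bump; case: (ltngtP k.+1 i) => [lt_ki | lt_ik | <-].
- by rewrite leqNgt (ltnW lt_ki).
- by rewrite -ltnS lt_ik.
- by rewrite ltnn [RHS]addrC subrKA.
Qed.

Lemma section_of_cochain_degen n j (x : X n) : (j <= n)%N ->
  section_of_cochain (dg j x) = tw_degen j (section_of_cochain x).
Proof.
rewrite /tw_degen; case: n x => [|n] x le_jn; congr pair; apply: eq_from_ent => k lt_kn.
  have [-> ->] : j = 0%N /\ k = 0%N by lia.
  by rewrite ent_alpha_diffs // ent_ndegen // alpha0_degen0 subr0.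
rewrite ent_alpha_diffs // ent_ndegen // !alpha0_degen //; try lia.
rewrite /unbump; case: (ltngtP k j) => [lt_kj | lt_jk | ->].
- have -> : (k.+1 - (j < k.+1) = k.+1)%N by lia.
  by rewrite subn0 ent_alpha_diffs //; lia.
- have -> : (k.+1 - (j < k.+1) = k)%N by lia.
  by rewrite subn1 ent_alpha_diffs ?prednK //; lia.
- by rewrite ltnSn subn0 subn1 subrr.
Qed.

Lemma section_of_cochain_is_section : is_section section_of_cochain.
Proof.
split=> [|n x]; last by case: n x.
by split=> n ? ? ?; [exact: section_of_cochain_face | exact: section_of_cochain_degen].
Qed.

Lemma section_of_cochain_low : low_formulas a section_of_cochain.
Proof.
split=> x //=; congr pair; apply/ffunP => k; rewrite !ffunE.
  by rewrite (ord1 k) subr0.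
by case: k => -[|[|k]] //= _; rewrite subr0.
Qed.
End Cochain.

End Twisting.
End Simplicial.

Section Sections.
Variables (H : zmodType) (X : ssdata) (gamma : X 2 -> H).
Implicit Types psi : forall n, X n -> TwProd gamma n.
Local Open Scope ring_scope.

Lemma sectionE psi n (x : X n) : is_section psi -> psi n x = ((psi n x).1, x).
Proof. by case=> _ proj_psi; rewrite -[X in (_, X)](proj_psi n x); case: (psi n x). Qed.

Lemma section0E psi (x : X 0) : is_section psi -> psi 0%N x = ([ffun _ => 0], x).
Proof. by move/(sectionE x) ->; congr pair; apply/ffunP => -[]. Qed.

(* The last face of [psi x] gives all coordinates but the last one, and its
   face 0 all coordinates but the first one. *)
Lemma section_eq_succ psi psi' n : is_section psi -> is_section psi' ->
  (forall x : X n.+1, psi _ x = psi' _ x) -> forall x : X n.+2, psi _ x = psi' _ x.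
Proof.
move=> psi_sec psi'_sec eq_n x.
have [[psi_face _] _] := psi_sec; have [[psi'_face _] _] := psi'_sec.
have face_eq i : (i <= n.+2)%N -> tw_face gamma i (psi _ x) = tw_face gamma i (psi' _ x).
  move=> le_in; have := psi_face _ i x le_in.
  by rewrite eq_n psi'_face // => /esym face_eq; exact: face_eq.
move: (face_eq 0%N isT) (face_eq n.+2 (leqnn _)).
rewrite (sectionE x psi_sec) (sectionE x psi'_sec) /tw_face /= => -[first_eq] [last_eq].
congr pair; apply: eq_from_ent => k lt_kn; case: (ltnP k n.+1) => le_kn.
  by move/(congr1 (fun g => ent g k)): last_eq; rewrite !ent_nface // !ifT.
have -> : k = n.+1 by lia.
by move/(congr1 (fun g => ent g n)): first_eq; rewrite !ent_tadd // !ent_nface0 // => /addIr.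
Qed.

Lemma section_eq psi psi' : is_section psi -> is_section psi' -> psi 1%N =1 psi' 1%N -> psi = psi'.
Proof.
move=> psi_sec psi'_sec eq1; apply: functional_extensionality_dep => n.
apply: functional_extensionality; elim: n => [|[|n] IH] x.
- by rewrite !section0E.
- exact: eq1.
- exact: section_eq_succ IH x.
Qed.

Lemma section_eq_low a psi psi' : is_section psi -> is_section psi' ->
  low_formulas a psi -> low_formulas a psi' -> psi = psi'.
Proof.
by move=> psi_sec psi'_sec [_ low1 _] [_ low1' _]; apply: section_eq => // x; rewrite low1 low1'.
Qed.

Definition cochain_of_section psi (x : X 1) : H := (psi 1%N x).1 ord0.

Lemma cochain_of_section_No psi : is_section psi -> No gamma (cochain_of_section psi).
Proof.
move=> psi_sec; have [[psi_face psi_degen] _] := psi_sec; split=> [y | x].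
  by rewrite /cochain_of_section psi_degen // section0E //= ffunE.
rewrite /cobound1 /cochain_of_section !psi_face // (sectionE x psi_sec) /tw_face /= !ffunE /=.
set e0 := ent _ 0%N; set e1 := ent _ 1%N.
by rewrite (addrC e1) (addrC e0) addrKA subrK.
Qed.

Lemma cochain_of_section_low psi : is_section psi -> low_formulas (cochain_of_section psi) psi.
Proof.
move=> psi_sec; have [[psi_face _] _] := psi_sec.
split=> x; rewrite (sectionE x psi_sec); congr pair.
- by apply/ffunP => -[].
- by apply/ffunP => k; rewrite ffunE (ord1 k).
- apply/ffunP => -[j lt_j2].
  rewrite ffunE /cochain_of_section !psi_face // /tw_face /= !ffunE /= -entE.
  by case: j lt_j2 => [|[|j]] lt_j2 //=; rewrite addrC addKr.
Qed.

Lemma cochain_of_sectionE a psi : low_formulas a psi -> cochain_of_section psi = a.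
Proof.
by case=> _ low1 _; apply: functional_extensionality => x; rewrite /cochain_of_section low1 ffunE.
Qed.

End Sections.

Theorem mainTheorem8 (H : zmodType) (X : ssdata) (gamma : X 2 -> H) :
  is_simplicial X ->
  normalized2 gamma -> cocycle2 gamma ->
  (* each alpha in No(X,H,gamma) gives a unique section phi_alpha *)
  (forall a : X 1 -> H, No gamma a ->
     exists! phi : forall n, X n -> TwProd gamma n,
       is_section phi /\ low_formulas a phi) /\
  (* alpha |-> phi_alpha is a bijection No -> Sec *)
  (forall phi : forall n, X n -> TwProd gamma n, is_section phi ->
     exists! a : X 1 -> H, No gamma a /\ low_formulas a phi).
Proof.
move=> X_simplicial _ gamma_cocycle; split=> [a [a_normalized a_cobound] | psi psi_sec].
  have phi_sec := section_of_cochain_is_section X_simplicial gamma_cocycle a_normalized a_cobound.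
  have phi_low := section_of_cochain_low gamma a.
  exists (section_of_cochain gamma a); split=> [// | psi [psi_sec psi_low]].
  exact: section_eq_low phi_sec psi_sec phi_low psi_low.
exists (cochain_of_section psi); split=> [| b [_ b_low]]; last exact: cochain_of_sectionE b_low.
by split; [exact: cochain_of_section_No | exact: cochain_of_section_low].
Qed.
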